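(* Let $0<\epsilon<1$ and let $(G,\lambda^\mu),(G,\lambda^\nu)$ be two hardcore models on $G=(V,E)$, $n=|V|$, with Gibbs distributions $\mu,\nu$, both satisfying the uniqueness condition with constant gap $\eta$, and with $D:=d_{\mathrm{par}}(\mu,\nu)<\theta:=10^{-10}\frac{\epsilon^{1/4}}{n^{5/2}}$. Let $d=d_{TV}(\mu,\nu)$, $\kappa=10^{-9}\frac{\epsilon^{1/4}}{n^{3/2}}$, $B=\{v\in V:\min\{\lambda^\mu_v,\lambda^\nu_v\}\ge\kappa\}$, $S=V\setminus B$, and let $\Omega_B\subseteq\{\pm1\}^B$ be the support of both $\mu_B$ and $\nu_B$. Define $f:\Omega_B\to\mathbb{R}$ by $$f(x)=\frac12\sum_{y\in\{\pm1\}^S}\left|\frac{\nu_B(x)}{\mu_B(x)}\nu^x_S(y)-\mu^x_S(y)\right|.$$ Then $\mathrm{Var}_{x\sim\mu_B}[f(x)]=O_\eta(d^2)\cdot(n^3+n/\kappa)$, where $O_\eta$ hides a constant depending only on $\eta$.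
   Context: Hardcore model $(G,\lambda)$: weight on $\sigma\in\{-1,+1\}^V$ is $\prod_{v:\sigma_v=+1}\lambda_v$ if $\{v:\sigma_v=+1\}$ is independent, else $0$; Gibbs distribution is the normalized weight. Uniqueness condition with gap $\eta\in(0,1)$: $\lambda_v\le(1-\eta)\frac{(\Delta-1)^{\Delta-1}}{(\Delta-2)^\Delta}$ for all $v$, with $\Delta\ge3$ the maximum degree. $d_{\mathrm{par}}(\mu,\nu)=\max_v|\lambda^\mu_v-\lambda^\nu_v|$. $\mu_B$ is the marginal of $\mu$ on $B$, and $\mu^x_S$ is the distribution on $\{\pm1\}^S$ of $\mu$ conditioned on the configuration $x$ on $B$ (similarly for $\nu$). *)

From mathcomp Require Import all_boot all_order all_algebra.
From mathcomp Require Import reals.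
Set Implicit Arguments. Unset Strict Implicit. Unset Printing Implicit Defensive.
Import Order.TTheory GRing.Theory Num.Theory.
Local Open Scope ring_scope.

(* A graph G = (V,E) is a symmetric irreflexive relation e on a finType V.
   A spin configuration sigma in {-1,+1}^V is encoded by its set of
   +1 vertices (a {set V}); a configuration on B subset V is encoded by a
   subset of B. *)

Section Hardcore.
Variables (R : realType) (V : finType) (e : rel V).

Definition deg (v : V) : nat := #|[set u | e v u]|.
Definition maxdeg : nat := (\max_(v : V) deg v)%N.

Definition independent (A : {set V}) : bool :=
  [forall u in A, forall v in A, ~~ e u v].

Definition hc_weight (lam : V -> R) (s : {set V}) : R :=
  if independent s then \prod_(v in s) lam v else 0.

Definition hc_Z (lam : V -> R) : R := \sum_(s : {set V}) hc_weight lam s.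

Definition gibbs (lam : V -> R) (s : {set V}) : R := hc_weight lam s / hc_Z lam.

Definition uniqueness (eta : R) (lam : V -> R) : Prop :=
  forall v, lam v <= (1 - eta) *
     (((maxdeg - 1)%:R ^+ (maxdeg - 1)) / ((maxdeg - 2)%:R ^+ maxdeg)).

Definition dpar (lmu lnu : V -> R) : R := \big[Num.max/0]_(v : V) `|lmu v - lnu v|.

Definition dTV (mu nu : {set V} -> R) : R :=
  2^-1 * \sum_(s : {set V}) `|mu s - nu s|.

Definition marg (mu : {set V} -> R) (B x : {set V}) : R :=
  \sum_(s : {set V} | s :&: B == x) mu s.

Definition cond (mu : {set V} -> R) (B x y : {set V}) : R :=
  mu (x :|: y) / marg mu B x.

Definition ffun_f (mu nu : {set V} -> R) (B x : {set V}) : R :=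
  2^-1 * \sum_(y : {set V} | y \subset ~: B)
     `| marg nu B x / marg mu B x * cond nu B x y - cond mu B x y |.

Definition var_margB (mu : {set V} -> R) (B : {set V}) (g : {set V} -> R) : R :=
  let Om := [pred x : {set V} | (x \subset B) && (0 < marg mu B x)] in
  \sum_(x in Om) marg mu B x * g x ^+ 2
  - (\sum_(x in Om) marg mu B x * g x) ^+ 2.

End Hardcore.

From mathcomp Require Import all_boot all_order all_algebra.
From mathcomp Require Import reals sequences exp.
From mathcomp Require Import ring lra.
Set Implicit Arguments. Unset Strict Implicit. Unset Printing Implicit Defensive.
Import Order.TTheory GRing.Theory Num.Theory.
Local Open Scope ring_scope.

(* Write D = d_par(mu, nu), u = D / kappa and n = |V|.  Since Var X <= (sup X) * E X for a
   nonnegative X, it suffices to bound E f and sup f on the support of mu_B.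
   - mu_B(x) f(x) is half the l1-distance between mu and nu restricted to the configurations
     extending x; summing over x gives E f <= d_TV(mu, nu).
   - On B the activities are at least kappa, so there the two models differ by a factor at most
     1 + u, and everywhere by at most D <= u.  Expanding the partition functions (the global one and
     the ones pinned to x on B) in the activities shows that each changes by a factor at most
     K = (1 + u)^(3n) between the activities min(lam^mu, lam^nu) and max(lam^mu, lam^nu), whence
     f(x) <= (K^2 - 1)/2 = O(n u) because 10 n u < 1.
   - D = O(d_TV): mu(v in s) = lam_v mu(s avoids N[v]), and mu(s avoids N[v]) is at least
     prod_{N[v]} (1 + lam)^-1, which the uniqueness condition bounds below by exp(-5 e^2).
   Altogether Var f = O(n (D / kappa) d_TV) = O(d_TV^2 n / kappa). *)

Lemma normB_le_sandwich (R : realDomainType) (m M a b K : R) :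
  m <= a -> m <= b -> a <= M -> b <= M -> M <= K * m -> 1 <= K ->
  `|a - b| <= (K - 1) * b.
Proof.
move=> ma mb aM bM MK K1.
have : 1 * (b - m) <= K * (b - m) by apply: ler_wpM2r; rewrite ?subr_ge0.
by rewrite ler_norml => ?; apply/andP; split; lra.
Qed.

Lemma expr1Dx_mul_1B_le1 (R : realDomainType) (x : R) k :
  0 <= x -> (1 + x) ^+ k * (1 - k%:R * x) <= 1.
Proof.
move=> x0; elim: k => [|k IH]; first by rewrite expr0 mul0r subr0 mul1r.
have x1 : 0 <= 1 + x by lra.
rewrite exprS -mulrA; apply: le_trans IH; rewrite mulrCA ler_wpM2l ?exprn_ge0 //.
by have := mulr_ge0 (ler0n R k) (sqr_ge0 x); rewrite -natr1; nra.
Qed.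

Lemma expr1Dx_sub1_le (R : realFieldType) (x : R) k :
  0 <= x -> k%:R * x <= 3 / 5 -> (1 + x) ^+ k - 1 <= 5 / 2 * (k%:R * x).
Proof.
move=> x0 kx; have := expr1Dx_mul_1B_le1 k x0.
have W0 : 0 <= (1 + x) ^+ k by rewrite exprn_ge0 //; lra.
have t0 : 0 <= k%:R * x by rewrite mulr_ge0.
move: W0 t0 kx; set W := (1 + x) ^+ k; set t := k%:R * x => W0 t0 kx Wt.
have h1 : 0 <= W * (3 / 5 - t) by rewrite mulr_ge0 // subr_ge0.
have W_le : W <= 5 / 2 by lra.
have h2 : 0 <= t * (5 / 2 - W) by rewrite mulr_ge0 // subr_ge0.
lra.
Qed.

Lemma prod1D_le_expR (R : realType) (I : finType) (A : {pred I}) (x : I -> R) :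
  (forall i, 0 <= x i) -> \prod_(i in A) (1 + x i) <= expR (\sum_(i in A) x i).
Proof.
move=> x0; rewrite expR_sum; apply: ler_prod => i _.
by rewrite expR_ge1Dx andbT; have := x0 i; lra.
Qed.

Lemma prod_scale_le (R : numDomainType) (I : finType) (A : {pred I}) (al : R) (a : I -> R) :
  1 <= al -> (forall i, 0 <= a i) ->
  \prod_(i in A) (al * a i) <= al ^+ #|I| * \prod_(i in A) a i.
Proof.
by move=> al1 a0; rewrite prodrMl ler_wpM2r ?prodr_ge0 //; apply/ler_weXn2l/max_card.
Qed.

Lemma critical_activity_bound (R : realType) (D : nat) : (3 <= D)%N ->
  (D + 2)%:R * ((D - 1)%:R ^+ (D - 1) / (D - 2)%:R ^+ D) <= 5 * expR 2 :> R.
Proof.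
(* With D = m + 2: (1 + 1/m)^(m+1) <= e^2 and (m + 4)/m <= 5. *)
case: D => [|[|m]] // m1; rewrite !subSS !subn0.
have m_ge1 : (1 : R) <= m%:R by rewrite ler1n.
have m_gt0 : (0 : R) < m%:R by lra.
have inv_le1 : m%:R^-1 <= 1 :> R by rewrite invf_le1.
have inv_ge0 : 0 <= m%:R^-1 :> R by rewrite invr_ge0 ltW.
have -> : m.+1%:R ^+ m.+1 / m%:R ^+ m.+2 = (1 + m%:R^-1) ^+ m.+1 / m%:R :> R.
  rewrite (_ : 1 + m%:R^-1 = m.+1%:R / m%:R); last by rewrite -natr1; field; lra.
  by rewrite expr_div_n [m%:R ^+ m.+2]exprS; field; rewrite expf_neq0 lt0r_neq0.
have pow_le : (1 + m%:R^-1) ^+ m.+1 <= expR 2 :> R.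
  apply: le_trans (_ : expR (m%:R^-1) ^+ m.+1 <= _).
    by apply: lerXn2r; rewrite ?nnegrE ?expR_ge0 ?expR_ge1Dx //; lra.
  rewrite -expRM_natl ler_expR -natr1 mulrDl mul1r mulfV ?lt0r_neq0 //; lra.
have ratio_le : (m.+2 + 2)%:R / m%:R <= 5 :> R.
  by rewrite addn2 -addn4 natrD ler_pdivrMr //; lra.
rewrite mulrA mulrAC.
apply: ler_pM => //; first by rewrite divr_ge0 // ltW.
by rewrite exprn_ge0 //; lra.
Qed.

Section SubsetSums.
Variables (R : realType) (V : finType).
Implicit Types (Q B x : {set V}) (F : {set V} -> R).

Lemma sum_subset_set0 F : \sum_(y : {set V} | y \subset set0) F y = F set0.
Proof. by apply: big_pred1 => y; rewrite /= subset0. Qed.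

Lemma sum_subset_setD1 Q p F : p \in Q ->
  \sum_(y : {set V} | y \subset Q) F y =
  \sum_(y : {set V} | y \subset Q :\ p) F y + \sum_(y : {set V} | y \subset Q :\ p) F (p |: y).
Proof.
move=> pQ; rewrite (bigID (fun y : {set V} => p \notin y)) /=; congr (_ + _).
  by apply: eq_bigl => y; rewrite subsetD1.
rewrite (reindex_onto (fun z => p |: z) (fun y => y :\ p)) /=; last first.
  by move=> y /andP[_]; rewrite negbK => py; rewrite setD1K.
apply: eq_bigl => z; rewrite setU11 andbT subUset sub1set pQ /= subsetD1.
have [pz|pz] := boolP (p \in z); last by rewrite setU1K // eqxx.
rewrite andbF; apply/negbTE/negP => /andP[_ /eqP zE].
by move: pz; rewrite -zE setD11.
Qed.

(* Expanding prod_(v in y) (a v + b v), the term prod_(v in z) a v * prod_(v in y :\: z) b v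
   can be charged to z, whose weight g z is the larger one. *)
Lemma sum_subset_antitone_prodD (a b : V -> R) (g : {set V} -> R) Q :
  (forall v, 0 <= a v) -> (forall v, 0 <= b v) ->
  (forall y, 0 <= g y) -> (forall y z : {set V}, z \subset y -> g y <= g z) ->
  \sum_(y : {set V} | y \subset Q) g y * \prod_(v in y) (a v + b v) <=
  \prod_(v in Q) (1 + b v) * \sum_(y : {set V} | y \subset Q) g y * \prod_(v in y) a v.
Proof.
move=> a0 b0; elim: {Q}#|Q| {-2}Q (erefl #|Q|) g => [|k IH] Q cardQ g g0 g_anti.
  move/eqP: cardQ; rewrite cards_eq0 => /eqP ->.
  by rewrite !sum_subset_set0 !big_set0 mul1r.
have [p pQ] : exists p, p \in Q by apply/set0Pn; rewrite -card_gt0 cardQ.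
have cardQp : #|Q :\ p| = k by move: cardQ; rewrite (cardsD1 p) pQ add1n => -[].
set Q' := Q :\ p.
have notin_p (y : {set V}) : y \subset Q' -> p \notin y by rewrite /Q' subsetD1 => /andP[].
have prod_p (c : V -> R) (h : {set V} -> R) :
    \sum_(y : {set V} | y \subset Q') h y * \prod_(v in p |: y) c v =
    c p * \sum_(y : {set V} | y \subset Q') h y * \prod_(v in y) c v.
  by rewrite mulr_sumr; apply: eq_bigr => y /notin_p py; rewrite big_setU1 //= mulrCA.
rewrite !(sum_subset_setD1 _ pQ) !prod_p (big_setD1 p pQ) /= -/Q'.
set P := \prod_(v in Q') (1 + b v).
set T1 := \sum_(y : {set V} | y \subset Q') g y * \prod_(v in y) a v.
set T2 := \sum_(y : {set V} | y \subset Q') g (p |: y) * \prod_(v in y) a v.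
have IH1 := IH Q' cardQp g g0 g_anti.
have IH2 := IH Q' cardQp (fun y => g (p |: y)) (fun y => g0 _)
  (fun y z zy => g_anti _ _ (setUS [set p] zy)).
rewrite -/T1 -/T2 -/P in IH1 IH2.
have T21 : T2 <= T1.
  apply: ler_sum => y _; apply: ler_wpM2r; first exact: prodr_ge0.
  exact/g_anti/subsetUr.
have T20 : 0 <= T2.
  by apply: sumr_ge0 => y _; apply: mulr_ge0 => //; apply: prodr_ge0.
have P0 : 0 <= P by apply: prodr_ge0 => v _; have := b0 v; lra.
have ap := a0 p; have bp := b0 p.
apply: le_trans (lerD IH1 (ler_wpM2l _ IH2)) _; first lra.
have : 0 <= P * b p * (T1 - T2 + a p * T2) by apply: mulr_ge0; [apply: mulr_ge0|nra].
nra.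
Qed.

Lemma sum_subset_antitone_prod_le (a c : V -> R) (g : {set V} -> R) (al be : R) Q :
  (forall v, 0 <= a v) -> (forall v, 0 <= c v) -> (forall v, c v <= al * a v + be) ->
  1 <= al -> 0 <= be ->
  (forall y, 0 <= g y) -> (forall y z : {set V}, z \subset y -> g y <= g z) ->
  \sum_(y : {set V} | y \subset Q) g y * \prod_(v in y) c v <=
  al ^+ #|V| * (1 + be) ^+ #|V| * \sum_(y : {set V} | y \subset Q) g y * \prod_(v in y) a v.
Proof.
move=> a0 c0 c_le al1 be0 g0 g_anti.
have al_a0 v : 0 <= al * a v by rewrite mulr_ge0 // (le_trans ler01).
apply: le_trans (_ : \sum_(y : {set V} | y \subset Q) g y * \prod_(v in y) (al * a v + be) <= _).
  by apply: ler_sum => y _; apply/ler_wpM2l/ler_prod => // v _; rewrite c0 c_le.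
apply: le_trans (sum_subset_antitone_prodD _ al_a0 (fun=> be0) g0 g_anti) _.
rewrite [leRHS]mulrAC [leRHS]mulrC; apply: ler_pM.
- by apply: prodr_ge0 => v _; lra.
- by apply: sumr_ge0 => y _; rewrite mulr_ge0 ?prodr_ge0.
- by rewrite prodr_const; apply/ler_weXn2l/max_card; lra.
rewrite mulr_sumr; apply: ler_sum => y _; rewrite mulrCA ler_wpM2l //.
exact: prod_scale_le.
Qed.

Lemma sum_setI_eq B x F : x \subset B ->
  \sum_(s : {set V} | s :&: B == x) F s = \sum_(y : {set V} | y \subset ~: B) F (x :|: y).
Proof.
move=> xB; rewrite (reindex_onto (fun y => x :|: y) (fun s => s :&: ~: B)) /=; last first.
  by move=> s /eqP <-; rewrite -setIUr setUCr setIT.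
apply: eq_bigl => y; have [yB|yB] := boolP (y \subset ~: B); last first.
  apply/negbTE/negP => /andP[_ /eqP yE].
  by move: yB; rewrite -yE subsetIr.
have /eqP yBE : y :&: B == set0 by rewrite setI_eq0 -[B]setCK -subsets_disjoint.
have /eqP xBE : x :&: ~: B == set0 by rewrite setI_eq0 -subsets_disjoint.
by rewrite !setIUl yBE xBE setU0 set0U (setIidPl xB) (setIidPl yB) !eqxx.
Qed.

Lemma sum_subset_setU B F :
  \sum_(x : {set V} | x \subset B) \sum_(y : {set V} | y \subset ~: B) F (x :|: y) =
  \sum_(s : {set V}) F s.
Proof.
symmetry; rewrite (partition_big (fun s => s :&: B) (fun x : {set V} => x \subset B)) /=;
  last by move=> s _; apply: subsetIr.
by apply: eq_bigr => x xB; rewrite sum_setI_eq.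
Qed.

End SubsetSums.

Section HardcoreWeights.
Variables (R : realType) (V : finType) (e : rel V).
Implicit Types (lam a c : V -> R) (s t x y z B : {set V}).

Lemma independentS y z : z \subset y -> independent e y -> independent e z.
Proof.
move=> zy /forall_inP ind_y; apply/forall_inP => u /(subsetP zy) uy.
by apply/forall_inP => v /(subsetP zy) vy; have /forall_inP := ind_y u uy; apply.
Qed.

Lemma independent0 : independent e set0.
Proof. by apply/forall_inP => u; rewrite inE. Qed.

Lemma hc_weight_ge0 lam s : (forall v, 0 <= lam v) -> 0 <= hc_weight e lam s.
Proof. by move=> lam0; rewrite /hc_weight; case: ifP => // _; apply: prodr_ge0. Qed.

Lemma hc_weight_gt0 lam s : (forall v, 0 < lam v) ->
  (0 < hc_weight e lam s) = independent e s.
Proof.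
by move=> lam0; rewrite /hc_weight; case: ifP => _; [apply: prodr_gt0 | rewrite ltxx].
Qed.

Lemma hc_weight_le a c s : (forall v, 0 <= a v) -> (forall v, a v <= c v) ->
  hc_weight e a s <= hc_weight e c s.
Proof.
move=> a0 ac; rewrite /hc_weight; case: ifP => // _.
by apply: ler_prod => v _; rewrite a0 ac.
Qed.

Lemma hc_weight_set0 lam : hc_weight e lam set0 = 1.
Proof. by rewrite /hc_weight independent0 big_set0. Qed.

Lemma hc_Z_ge1 lam : (forall v, 0 <= lam v) -> 1 <= hc_Z e lam.
Proof.
move=> lam0; rewrite /hc_Z (bigD1 set0) //= hc_weight_set0 lerDl.
by apply: sumr_ge0 => s _; apply: hc_weight_ge0.
Qed.

Lemma hc_Z_gt0 lam : (forall v, 0 <= lam v) -> 0 < hc_Z e lam.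
Proof. by move/hc_Z_ge1; apply: lt_le_trans. Qed.

Lemma gibbs_ge0 lam s : (forall v, 0 <= lam v) -> 0 <= gibbs e lam s.
Proof. by move=> lam0; rewrite divr_ge0 ?hc_weight_ge0 ?(ltW (hc_Z_gt0 _)). Qed.

Definition hc_Zpin lam B x : R :=
  \sum_(y : {set V} | y \subset ~: B) hc_weight e lam (x :|: y).

Lemma marg_gibbsE lam B x : x \subset B ->
  marg (gibbs e lam) B x = hc_Zpin lam B x / hc_Z e lam.
Proof. by move=> xB; rewrite /marg sum_setI_eq // /hc_Zpin mulr_suml. Qed.

Lemma hc_Zpin_gt0 lam B x : (forall v, 0 < lam v) ->
  (0 < hc_Zpin lam B x) = independent e x.
Proof.
move=> lam0; have [ind_x|dep_x] := boolP (independent e x).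
  rewrite /hc_Zpin (bigD1 set0) ?sub0set //= setU0 ltr_wpDr ?hc_weight_gt0 //.
  by apply: sumr_ge0 => y _; apply: hc_weight_ge0 => v; apply: ltW.
rewrite /hc_Zpin big1 ?ltxx // => y _; rewrite /hc_weight ifN //.
by apply: contra dep_x; apply/independentS/subsetUl.
Qed.

Lemma marg_gibbs_gt0 lam B x : (forall v, 0 < lam v) -> x \subset B ->
  (0 < marg (gibbs e lam) B x) = independent e x.
Proof.
move=> lam0 xB; rewrite marg_gibbsE // pmulr_lgt0 ?hc_Zpin_gt0 //.
by rewrite invr_gt0 hc_Z_gt0 // => v; apply: ltW.
Qed.

Lemma hc_ZE lam : hc_Z e lam = hc_Zpin lam set0 set0.
Proof. by apply: eq_big => [s|s _]; rewrite ?setC0 ?subsetT ?set0U. Qed.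

Lemma hc_Z_le a c : (forall v, 0 <= a v) -> (forall v, a v <= c v) ->
  hc_Z e a <= hc_Z e c.
Proof. by move=> a0 ac; apply: ler_sum => s _; apply: hc_weight_le. Qed.

Lemma hc_Zpin_le a c B x : (forall v, 0 <= a v) -> (forall v, a v <= c v) ->
  hc_Zpin a B x <= hc_Zpin c B x.
Proof. by move=> a0 ac; apply: ler_sum => s _; apply: hc_weight_le. Qed.

Lemma hc_Zpin_le_affine a c (al be : R) B x :
  (forall v, 0 <= a v) -> (forall v, 0 <= c v) ->
  (forall v, c v <= al * a v + be) -> (forall v, v \in x -> c v <= al * a v) ->
  1 <= al -> 0 <= be -> x \subset B ->
  hc_Zpin c B x <= al ^+ (2 * #|V|) * (1 + be) ^+ #|V| * hc_Zpin a B x.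
Proof.
move=> a0 c0 c_le c_le_x al1 be0; rewrite subsets_disjoint => xB.
pose g y : R := (independent e (x :|: y))%:R.
have g_anti y z : z \subset y -> g y <= g z.
  move=> zy; rewrite /g; have [ind|] := boolP (independent e (x :|: y)) => //=.
  by rewrite (independentS (setUS x zy) ind).
have weightE lam y : y \subset ~: B ->
    hc_weight e lam (x :|: y) = \prod_(v in x) lam v * (g y * \prod_(v in y) lam v).
  move=> yB; rewrite /hc_weight /g.
  have -> : \prod_(v in x :|: y) lam v = \prod_(v in x) lam v * \prod_(v in y) lam v.
    by rewrite -bigU ?(disjointWr yB) //; apply: eq_bigl => v; rewrite !inE.
  by case: (independent e _); rewrite ?mul1r ?mul0r ?mulr0.
rewrite /hc_Zpin (eq_bigr _ (fun y => weightE c y)) (eq_bigr _ (fun y => weightE a y)).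
rewrite -!mulr_sumr mulnC exprM expr2.
have prod_x : \prod_(v in x) c v <= al ^+ #|V| * \prod_(v in x) a v.
  apply: le_trans (prod_scale_le _ al1 a0); apply: ler_prod => v vx.
  by rewrite c0 c_le_x.
have := sum_subset_antitone_prod_le (~: B) a0 c0 c_le al1 be0 (fun y => ler0n R _) g_anti.
set Sa := \sum_(y | _) g y * \prod_(v in y) a v => sum_c.
have -> : al ^+ #|V| * al ^+ #|V| * (1 + be) ^+ #|V| * (\prod_(v in x) a v * Sa) =
    al ^+ #|V| * \prod_(v in x) a v * (al ^+ #|V| * (1 + be) ^+ #|V| * Sa) by ring.
apply: ler_pM prod_x sum_c; first exact: prodr_ge0.
by apply: sumr_ge0 => y _; rewrite mulr_ge0 ?prodr_ge0.
Qed.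

Definition closed_nbr v : {set V} := v |: [set u | e v u].

Lemma hc_Z_le_closed_nbr lam v : (forall u, 0 <= lam u) ->
  hc_Z e lam <= \prod_(u in closed_nbr v) (1 + lam u) *
    \sum_(s : {set V} | s :&: closed_nbr v == set0) hc_weight e lam s.
Proof.
move=> lam0; set N := closed_nbr v.
pose a u := if u \in N then 0 else lam u; pose b u := if u \in N then lam u else 0.
pose g s : R := (independent e s)%:R.
have g_anti s t : t \subset s -> g s <= g t.
  rewrite /g; have [ind_s ts|] := boolP (independent e s) => //=.
  by rewrite (independentS ts ind_s).
have a0 u : 0 <= a u by rewrite /a; case: ifP.
have b0 u : 0 <= b u by rewrite /b; case: ifP.
have := sum_subset_antitone_prodD setT a0 b0 (fun s => ler0n R _) g_anti.
have -> : \sum_(s : {set V} | s \subset setT) g s * \prod_(u in s) (a u + b u) = hc_Z e lam.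
  apply: eq_big => [s|s _]; first by rewrite subsetT.
  rewrite /g /hc_weight; case: (independent e s); rewrite ?mul0r // mul1r.
  by apply: eq_bigr => u _; rewrite /a /b; case: ifP; rewrite ?addr0 ?add0r.
have -> : \prod_(u in setT) (1 + b u) = \prod_(u in N) (1 + lam u).
  rewrite [RHS]big_mkcond (eq_bigl predT) => [|u]; last by rewrite inE.
  by apply: eq_bigr => u _; rewrite /b; case: ifP; rewrite ?addr0.
suff -> : \sum_(s : {set V} | s \subset setT) g s * \prod_(u in s) a u =
    \sum_(s : {set V} | s :&: N == set0) hc_weight e lam s by [].
rewrite [RHS]big_mkcond; apply: eq_big => [s|s _]; first by rewrite subsetT.
have [/eqP sN|] := boolP (s :&: N == set0).
  rewrite /g /hc_weight; case: (independent e s); rewrite ?mul0r // mul1r.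
  apply: eq_bigr => u us; rewrite /a ifN //; apply: contraT; rewrite negbK => uN.
  by move/setP: sN => /(_ u); rewrite in_setI in_set0 us uN.
case/set0Pn => u; rewrite inE => /andP[us uN].
by rewrite (bigD1 u) //= /a uN mul0r mulr0.
Qed.

End HardcoreWeights.

Section ConditionalDistance.
Variables (R : realType) (V : finType).
Implicit Types (mu nu : {set V} -> R) (B x : {set V}).

Definition margB_supp mu B : pred {set V} :=
  [pred x : {set V} | (x \subset B) && (0 < marg mu B x)].

Lemma var_margB_le mu B (g : {set V} -> R) (U : R) :
  (forall x, x \in margB_supp mu B -> 0 <= g x <= U) ->
  var_margB mu B g <= U * \sum_(x in margB_supp mu B) marg mu B x * g x.
Proof.
move=> gU; rewrite /var_margB /= -/(margB_supp mu B) mulr_sumr.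
apply: le_trans (_ : \sum_(x in margB_supp mu B) marg mu B x * g x ^+ 2 <= _).
  by rewrite lerBlDr lerDl sqr_ge0.
apply: ler_sum => x x_supp; have /andP[_ mx0] := x_supp.
have /andP[g0 gU'] := gU x x_supp.
by rewrite expr2 mulrA [leRHS]mulrC ler_wpM2l // mulr_ge0 // ltW.
Qed.

Lemma ffun_fE mu nu B x : 0 < marg mu B x -> marg nu B x != 0 ->
  ffun_f mu nu B x =
  2^-1 * (\sum_(y : {set V} | y \subset ~: B) `|nu (x :|: y) - mu (x :|: y)|) / marg mu B x.
Proof.
move=> mx0 nx0; rewrite /ffun_f /cond -[RHS]mulrA [in RHS]mulr_suml; congr (_ * _).
apply: eq_bigr => y _.
rewrite (_ : _ - _ = (nu (x :|: y) - mu (x :|: y)) / marg mu B x); last first.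
  by field; rewrite lt0r_neq0.
by rewrite normrM normfV (gtr0_norm mx0).
Qed.

Lemma sum_marg_ffun_f_le_dTV mu nu B :
  (forall x, x \in margB_supp mu B -> marg nu B x != 0) ->
  \sum_(x in margB_supp mu B) marg mu B x * ffun_f mu nu B x <= dTV mu nu.
Proof.
move=> nx0.
apply: le_trans (_ : \sum_(x : {set V} | x \subset B)
    2^-1 * \sum_(y : {set V} | y \subset ~: B) `|nu (x :|: y) - mu (x :|: y)| <= _).
  rewrite big_mkcond [leRHS]big_mkcond /=; apply: ler_sum => x _.
  rewrite inE; have [xB|] := boolP (x \subset B) => //=.
  case: ifP => [mx0|_]; last by rewrite mulr_ge0 ?invr_ge0 ?sumr_ge0.
  by rewrite ffun_fE ?nx0 ?inE ?xB // mulrC divfK ?lt0r_neq0.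
rewrite -mulr_sumr (sum_subset_setU B (fun s => `|nu s - mu s|)) /dTV.
by under eq_bigr do rewrite distrC.
Qed.

Lemma dTV_ge0 mu nu : 0 <= dTV mu nu.
Proof. by rewrite mulr_ge0 ?invr_ge0 ?sumr_ge0. Qed.

Lemma ffun_f_ge0 mu nu B x : 0 <= ffun_f mu nu B x.
Proof. by rewrite mulr_ge0 ?invr_ge0 ?sumr_ge0. Qed.

(* mu and nu need not be normalised here, hence the factor 2. *)
Lemma dTV_event mu nu (E : pred {set V}) :
  `|\sum_(s | E s) mu s - \sum_(s | E s) nu s| <= 2 * dTV mu nu.
Proof.
rewrite -sumrB /dTV mulrA divff ?pnatr_eq0 // mul1r.
apply: le_trans (ler_norm_sum _ _ _) _.
by rewrite [leRHS](bigID E) /= lerDl sumr_ge0.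
Qed.

End ConditionalDistance.

Section GibbsComparison.
Variables (R : realType) (V : finType) (e : rel V).
Variables (lmu lnu : V -> R) (B x : {set V}).
Hypotheses (lmu_gt0 : forall v, 0 < lmu v) (lnu_gt0 : forall v, 0 < lnu v).
Hypotheses (xB : x \subset B) (ind_x : independent e x).

Let lmu_ge0 v : 0 <= lmu v. Proof. exact: ltW. Qed.
Let lnu_ge0 v : 0 <= lnu v. Proof. exact: ltW. Qed.

Lemma ffun_f_gibbsE :
  ffun_f (gibbs e lmu) (gibbs e lnu) B x =
  2^-1 * (\sum_(y : {set V} | y \subset ~: B)
    `|hc_Z e lmu * hc_weight e lnu (x :|: y) - hc_Z e lnu * hc_weight e lmu (x :|: y)|)
  / (hc_Z e lnu * hc_Zpin e lmu B x).
Proof.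
have Zmu0 := hc_Z_gt0 e lmu_ge0; have Znu0 := hc_Z_gt0 e lnu_ge0.
have Wmu0 : 0 < hc_Zpin e lmu B x by rewrite hc_Zpin_gt0.
rewrite ffun_fE ?lt0r_neq0 ?marg_gibbs_gt0 // marg_gibbsE //.
have termE y : `|gibbs e lnu (x :|: y) - gibbs e lmu (x :|: y)| =
    `|hc_Z e lmu * hc_weight e lnu (x :|: y) - hc_Z e lnu * hc_weight e lmu (x :|: y)|
    / (hc_Z e lmu * hc_Z e lnu).
  rewrite -[in RHS](gtr0_norm (mulr_gt0 Zmu0 Znu0)) -normf_div /gibbs.
  by congr `|_|; field; rewrite !lt0r_neq0.
rewrite (eq_bigr _ (fun y _ => termE y)) -mulr_suml.
by field; rewrite !lt0r_neq0.
Qed.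

Lemma ffun_f_gibbs_le (lm lM : V -> R) (K : R) :
  (forall v, 0 <= lm v) -> (forall v, lm v <= lmu v) -> (forall v, lm v <= lnu v) ->
  (forall v, lmu v <= lM v) -> (forall v, lnu v <= lM v) -> 1 <= K ->
  hc_Z e lM <= K * hc_Z e lm -> hc_Zpin e lM B x <= K * hc_Zpin e lm B x ->
  ffun_f (gibbs e lmu) (gibbs e lnu) B x <= (K ^+ 2 - 1) / 2.
Proof.
move=> lm0 lm_mu lm_nu mu_lM nu_lM K1 Z_lM W_lM.
have Znu0 := hc_Z_gt0 e lnu_ge0.
have Wmu0 : 0 < hc_Zpin e lmu B x by rewrite hc_Zpin_gt0.
have Wnu0 : 0 < hc_Zpin e lnu B x by rewrite hc_Zpin_gt0.
have Z_dist : `|hc_Z e lmu - hc_Z e lnu| <= (K - 1) * hc_Z e lnu.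
  by apply: normB_le_sandwich Z_lM K1; apply: hc_Z_le.
set Zmu := hc_Z e lmu in Z_dist *; set Znu := hc_Z e lnu in Znu0 Z_dist *.
have term_le y :
    `|Zmu * hc_weight e lnu (x :|: y) - Znu * hc_weight e lmu (x :|: y)| <=
    `|Zmu - Znu| * hc_weight e lnu (x :|: y) +
    Znu * (hc_weight e lM (x :|: y) - hc_weight e lm (x :|: y)).
  pose w (lam : V -> R) := hc_weight e lam (x :|: y).
  have := hc_weight_le e (x :|: y) lm0 lm_nu; have := hc_weight_le e (x :|: y) lm0 lm_mu.
  have := hc_weight_le e (x :|: y) lmu_ge0 mu_lM; have := hc_weight_le e (x :|: y) lnu_ge0 nu_lM.
  rewrite -/(w lnu) -/(w lmu) -/(w lM) -/(w lm) => ? ? ? ?.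
  rewrite (_ : _ - _ = (Zmu - Znu) * w lnu + Znu * (w lnu - w lmu)); last by ring.
  apply: le_trans (ler_normD _ _) _.
  rewrite !normrM (ger0_norm (hc_weight_ge0 e _ lnu_ge0)) (gtr0_norm Znu0).
  by rewrite lerD2l ler_wpM2l ?(ltW Znu0) // ler_norml; apply/andP; split; lra.
rewrite ffun_f_gibbsE -/Zmu -/Znu ler_pdivrMr ?mulr_gt0 //.
apply: le_trans (ler_wpM2l _ (ler_sum _ (fun y _ => term_le y))) _; first by rewrite invr_ge0.
rewrite big_split /= -!mulr_sumr sumrB -!/(hc_Zpin e _ B x).
have Wnu_le := le_trans (hc_Zpin_le e B x lnu_ge0 nu_lM) W_lM.
have := ler_pM (normr_ge0 _) (ltW Wnu0) Z_dist Wnu_le.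
have := ler_wpM2l (ltW Znu0) W_lM.
have := ler_wpM2l (_ : 0 <= (K ^+ 2 - 1) * Znu) (hc_Zpin_le e B x lm0 lm_mu).
rewrite mulr_ge0 ?(ltW Znu0) ?subr_ge0 ?exprn_ege1 // => /(_ isT).
lra.
Qed.

Lemma ffun_f_le (u : R) : 0 <= u ->
  (forall v, `|lmu v - lnu v| <= u) ->
  (forall v, v \in B -> `|lmu v - lnu v| <= u * Num.min (lmu v) (lnu v)) ->
  ffun_f (gibbs e lmu) (gibbs e lnu) B x <= ((1 + u) ^+ (6 * #|V|) - 1) / 2.
Proof.
move=> u0 dist_u dist_uB.
pose lm v := Num.min (lmu v) (lnu v); pose lM v := Num.max (lmu v) (lnu v).
have lMlm v : lM v = lm v + `|lmu v - lnu v| by rewrite /lM /lm; case: lerP => _; ring.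
have lm_mu v : lm v <= lmu v by rewrite /lm ge_min lexx.
have lm_nu v : lm v <= lnu v by rewrite /lm ge_min lexx orbT.
have mu_lM v : lmu v <= lM v by rewrite /lM le_max lexx.
have nu_lM v : lnu v <= lM v by rewrite /lM le_max lexx orbT.
have lm0 v : 0 <= lm v by rewrite /lm le_min !ltW.
have lM0 v : 0 <= lM v by apply: le_trans (mu_lM v); apply: ltW.
have K1 : 1 <= (1 + u) ^+ (3 * #|V|) by rewrite exprn_ege1 //; lra.
have Zpin_lM (B' x' : {set V}) : x' \subset B' -> (forall v, v \in x' -> v \in B) ->
    hc_Zpin e lM B' x' <= (1 + u) ^+ (3 * #|V|) * hc_Zpin e lm B' x'.
  move=> x'B' x'B; rewrite mulSnr exprD.
  apply: hc_Zpin_le_affine => // [v|v vx'|]; rewrite ?lMlm; last lra.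
    by have := dist_u v; have := mulr_ge0 u0 (lm0 v); lra.
  by have := dist_uB v (x'B v vx'); rewrite /lm; lra.
apply: le_trans (ffun_f_gibbs_le lm0 lm_mu lm_nu mu_lM nu_lM K1 _ _) _.
- by rewrite !hc_ZE; apply: Zpin_lM => // v; rewrite inE.
- exact: Zpin_lM xB (subsetP xB).
by rewrite -exprM mulnAC.
Qed.

End GibbsComparison.

Section ActivityDistance.
Variables (R : realType) (V : finType) (e : rel V).
Implicit Types (lam lmu lnu : V -> R) (s t : {set V}).

Lemma dpar_ge0 lmu lnu : 0 <= dpar lmu lnu.
Proof. exact: bigmax_ge_id. Qed.

Lemma le_dpar lmu lnu v : `|lmu v - lnu v| <= dpar lmu lnu.
Proof. exact: (le_bigmax _ (fun v => `|lmu v - lnu v|)). Qed.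

Lemma dpar_le lmu lnu (c : R) : 0 <= c -> (forall v, `|lmu v - lnu v| <= c) ->
  dpar lmu lnu <= c.
Proof. by move=> c0 le_c; apply: bigmax_le. Qed.

Lemma maxdeg_le_card : (maxdeg e <= #|V|)%N.
Proof. by apply/bigmax_leqP => v _; apply: max_card. Qed.

Lemma card_closed_nbr v : (#|closed_nbr e v| <= (maxdeg e).+1)%N.
Proof.
rewrite cardsU1 addnC -addn1 leq_add ?leq_b1 //.
by change (deg e v <= maxdeg e)%N; rewrite /maxdeg; exact: leq_bigmax.
Qed.

Lemma activity_le_critical (eta : R) (lam : V -> R) v : 0 <= eta -> uniqueness e eta lam ->
  lam v <= (maxdeg e - 1)%:R ^+ (maxdeg e - 1) / (maxdeg e - 2)%:R ^+ maxdeg e.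
Proof.
move=> eta0 /(_ v); move/le_trans; apply; rewrite ler_piMl ?divr_ge0 ?exprn_ge0 //; lra.
Qed.

Lemma setI_closed_nbr_eq0 v t :
  (t :&: closed_nbr e v == set0) = (v \notin t) && [forall u in t, ~~ e v u].
Proof.
apply/eqP/andP => [/setP tN|[vt /forall_inP tv]].
  split; first by apply/negP => vt; have := tN v; rewrite !inE vt eqxx.
  by apply/forall_inP => u ut; apply/negP => evu; have := tN u; rewrite !inE ut evu orbT.
apply/setP => u; rewrite !inE; have [ut|] := boolP (u \in t) => //=.
by rewrite (negbTE (tv u ut)) orbF; apply: contraNF vt => /eqP <-.
Qed.

Hypotheses (esym : symmetric e) (eirr : irreflexive e).

Lemma independentU1 v t :
  independent e (v |: t) = independent e t && [forall u in t, ~~ e v u].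
Proof.
apply/idP/andP => [ind|[/forall_inP ind_t /forall_inP vt]].
  split; first exact: independentS (subsetUr _ _) ind.
  move/forall_inP: ind => ind; apply/forall_inP => u ut.
  by have /forall_inP := ind v (setU11 v t); apply; rewrite in_setU1 ut orbT.
apply/forall_inP => u; rewrite in_setU1 => /orP[/eqP ->|ut];
  apply/forall_inP => w; rewrite in_setU1 => /orP[/eqP ->|wt].
- by rewrite eirr.
- exact: vt.
- by rewrite esym vt.
- by have /forall_inP := ind_t u ut; apply.
Qed.

Lemma hc_weight_setU1 lam v t : v \notin t ->
  hc_weight e lam (v |: t) =
  if t :&: closed_nbr e v == set0 then lam v * hc_weight e lam t else 0.
Proof.
move=> vt; rewrite setI_closed_nbr_eq0 vt /= /hc_weight independentU1 big_setU1 //=.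
by case: (independent e t); case: [forall u in t, ~~ e v u]; rewrite ?mulr0.
Qed.

Lemma sum_hc_weight_mem lam v :
  \sum_(s : {set V} | v \in s) hc_weight e lam s =
  lam v * \sum_(s : {set V} | s :&: closed_nbr e v == set0) hc_weight e lam s.
Proof.
rewrite (reindex_onto (fun t => v |: t) (fun s => s :\ v)) /=; last first.
  by move=> s vs; rewrite setD1K.
rewrite (eq_bigl (fun t : {set V} => v \notin t)) => [|t]; last first.
  rewrite setU11 /=; have [vt|vt] := boolP (v \in t); last by rewrite setU1K ?eqxx.
  by apply/negbTE/negP => /eqP tE; move: vt; rewrite -tE setD11.
rewrite (eq_bigr _ (fun t => hc_weight_setU1 lam (v := v) (t := t))).
rewrite mulr_sumr big_mkcond [RHS]big_mkcond /=; apply: eq_bigr => t _.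
by rewrite setI_closed_nbr_eq0; case: (v \in t) => //=; case: ifP.
Qed.

Lemma activity_dist_le (lmu lnu : V -> R) v : (forall u, 0 < lmu u) -> (forall u, 0 < lnu u) ->
  `|lmu v - lnu v| <=
  2 * dTV (gibbs e lmu) (gibbs e lnu) * (1 + lnu v) * \prod_(u in closed_nbr e v) (1 + lmu u).
Proof.
move=> mu0 nu0; set d := dTV _ _; set P := \prod_(u in _) _.
pose free lam := \sum_(s : {set V} | s :&: closed_nbr e v == set0) gibbs e lam s.
have mem_free lam : \sum_(s : {set V} | v \in s) gibbs e lam s = lam v * free lam.
  by rewrite /free /gibbs -!mulr_suml sum_hc_weight_mem mulrA.
have free_ge : 1 <= P * free lmu.
  have Z0 : 0 < hc_Z e lmu by apply: hc_Z_gt0 => u; apply: ltW.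
  rewrite /free /gibbs -mulr_suml mulrA ler_pdivlMr // mul1r.
  by apply: hc_Z_le_closed_nbr => u; apply: ltW.
have p0 : 0 <= free lmu by apply: sumr_ge0 => s _; apply: gibbs_ge0 => u; apply: ltW.
have P0 : 0 <= P by apply: prodr_ge0 => u _; have := mu0 u; lra.
have key : `|lmu v - lnu v| * free lmu <= 2 * d * (1 + lnu v).
  have := dTV_event (gibbs e lmu) (gibbs e lnu) (fun s => v \in s); rewrite !mem_free.
  have := dTV_event (gibbs e lmu) (gibbs e lnu) (fun s => s :&: closed_nbr e v == set0).
  rewrite -/(free lmu) -/(free lnu) -/d => free_dist mem_dist.
  rewrite -(ger0_norm p0) -normrM.
  rewrite (_ : (lmu v - lnu v) * free lmu =
    (lmu v * free lmu - lnu v * free lnu) + lnu v * (free lnu - free lmu)); last by ring.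
  apply: le_trans (ler_normD _ _) _; rewrite normrM (gtr0_norm (nu0 v)) (distrC (free lnu)).
  have := ler_wpM2l (ltW (nu0 v)) free_dist; lra.
have := ler_wpM2l P0 key; have := ler_wpM2l (normr_ge0 (lmu v - lnu v)) free_ge; nra.
Qed.

Lemma dpar_le_dTV (eta : R) lmu lnu : (3 <= maxdeg e)%N -> 0 <= eta ->
  (forall v, 0 < lmu v) -> (forall v, 0 < lnu v) ->
  uniqueness e eta lmu -> uniqueness e eta lnu ->
  dpar lmu lnu <= 2 * expR (5 * expR 2) * dTV (gibbs e lmu) (gibbs e lnu).
Proof.
move=> D3 eta0 mu0 nu0 Umu Unu.
have d0 := dTV_ge0 (gibbs e lmu) (gibbs e lnu).
apply: dpar_le => [|v]; first by rewrite mulr_ge0 // mulr_ge0 ?expR_ge0.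
apply: le_trans (activity_dist_le v mu0 nu0) _.
pose X : R := (maxdeg e - 1)%:R ^+ (maxdeg e - 1) / (maxdeg e - 2)%:R ^+ maxdeg e.
have X0 : 0 <= X by rewrite divr_ge0 ?exprn_ge0.
have sum_le : \sum_(u in closed_nbr e v) lmu u <= (maxdeg e).+1%:R * X.
  apply: le_trans (_ : \sum_(u in closed_nbr e v) X <= _).
    by apply: ler_sum => u _; apply: activity_le_critical Umu.
  by rewrite sumr_const mulr_natl; apply: ler_wpMn2l => //; apply: card_closed_nbr.
have nbr_le : (1 + lnu v) * \prod_(u in closed_nbr e v) (1 + lmu u) <= expR (5 * expR 2).
  apply: le_trans (_ : expR (lnu v) * expR (\sum_(u in closed_nbr e v) lmu u) <= _).
    apply: ler_pM; rewrite ?expR_ge1Dx //.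
    - by have := nu0 v; lra.
    - by apply: prodr_ge0 => u _; have := mu0 u; lra.
    - by apply: prod1D_le_expR => u; apply: ltW.
  rewrite -expRD ler_expR; apply: le_trans (critical_activity_bound R D3).
  have := activity_le_critical v eta0 Unu; rewrite -/X natrD -natr1; lra.
have := ler_wpM2l (mulr_ge0 (ler0n R 2) d0) nbr_le; lra.
Qed.

End ActivityDistance.

Lemma var_ffun_f_le (R : realType) (V : finType) (e : rel V) (lmu lnu : V -> R)
    (B : {set V}) (kappa : R) :
  (forall v, 0 < lmu v) -> (forall v, 0 < lnu v) -> 0 < kappa -> kappa <= 1 ->
  (forall v, v \in B -> kappa <= Num.min (lmu v) (lnu v)) ->
  dpar lmu lnu * (10 * #|V|%:R) < kappa ->
  var_margB (gibbs e lmu) B (ffun_f (gibbs e lmu) (gibbs e lnu) B) <=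
  15 / 2 * #|V|%:R * (dpar lmu lnu / kappa) * dTV (gibbs e lmu) (gibbs e lnu).
Proof.
move=> mu0 nu0 kappa0 kappa1 kappaB Dkappa.
set D := dpar lmu lnu in Dkappa *; set u := D / kappa.
have D0 : 0 <= D := dpar_ge0 lmu lnu.
have u0 : 0 <= u by rewrite divr_ge0 // ltW.
have Du : D <= u by rewrite ler_pdivlMr // ler_piMr.
have nu_small : (6 * #|V|)%:R * u <= 3 / 5.
  by rewrite natrM /u mulrA ler_pdivrMr //; lra.
have f_le x : x \in margB_supp (gibbs e lmu) B ->
    0 <= ffun_f (gibbs e lmu) (gibbs e lnu) B x <= 15 / 2 * #|V|%:R * u.
  case/andP=> xB; rewrite marg_gibbs_gt0 // => ind_x; rewrite ffun_f_ge0 /=.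
  apply: le_trans (ffun_f_le mu0 nu0 xB ind_x u0 _ _) _.
  - by move=> v; apply: le_trans (le_dpar lmu lnu v) Du.
  - move=> v vB; apply: le_trans (le_dpar lmu lnu v) _.
    by rewrite -/D -(divfK (lt0r_neq0 kappa0) D) -/u ler_wpM2l ?kappaB.
  have := expr1Dx_sub1_le u0 nu_small; rewrite natrM; lra.
apply: le_trans (var_margB_le f_le) _.
apply: ler_wpM2l; first by have := mulr_ge0 (ler0n R #|V|) u0; lra.
apply: sum_marg_ffun_f_le_dTV => x /andP[xB].
by rewrite !marg_gibbs_gt0 // => ind_x; rewrite lt0r_neq0 // marg_gibbs_gt0.
Qed.

Lemma kappa_theta_bounds (R : realType) (eps n : R) : 0 < eps -> eps < 1 -> 1 <= n ->
  let kappa := 10 ^- 9 * Num.sqrt (Num.sqrt eps) / (n * Num.sqrt n) in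
  let theta := 10 ^- 10 * Num.sqrt (Num.sqrt eps) / (n ^+ 2 * Num.sqrt n) in
  [/\ 0 < kappa, kappa <= 1 & theta * (10 * n) = kappa].
Proof.
move=> eps0 eps1 n1 kappa theta.
have s0 : 0 < Num.sqrt (Num.sqrt eps) by rewrite !sqrtr_gt0.
have sqrt_le1 (a : R) : 0 <= a -> a <= 1 -> Num.sqrt a <= 1.
  by move=> a0 a1; rewrite -sqrtr1 ler_sqrt.
have s1 : Num.sqrt (Num.sqrt eps) <= 1 by rewrite !sqrt_le1 ?sqrtr_ge0 //; lra.
have sn1 : 1 <= Num.sqrt n by rewrite -sqrtr1 ler_sqrt //; lra.
have c0 : 0 < 10 ^- 9 :> R by rewrite invr_gt0 exprn_gt0.
have c1 : 10 ^- 9 <= 1 :> R by rewrite invf_le1 ?exprn_gt0 ?exprn_ege1 //; lra.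
split.
- by rewrite divr_gt0 ?mulr_gt0 //; lra.
- by rewrite ler_pdivrMr ?mulr_gt0 //; nra.
by rewrite /theta /kappa exprS invfM; field; rewrite !lt0r_neq0 //; lra.
Qed.

Theorem lemma5p4 (R : realType) (eta : R) (Heta0 : 0 < eta) (Heta1 : eta < 1) :
  exists C : R, 0 < C /\
  forall (V : finType) (e : rel V) (lmu lnu : V -> R) (eps : R),
    symmetric e -> irreflexive e ->
    (3 <= maxdeg e)%N ->
    0 < eps -> eps < 1 ->
    (forall v, 0 < lmu v) -> (forall v, 0 < lnu v) ->
    uniqueness e eta lmu -> uniqueness e eta lnu ->
    let n : R := #|V|%:R in
    let mu := gibbs e lmu in
    let nu := gibbs e lnu in
    let theta := 10 ^- 10 * Num.sqrt (Num.sqrt eps) / (n ^+ 2 * Num.sqrt n) in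
    dpar lmu lnu < theta ->
    let d := dTV mu nu in
    let kappa := 10 ^- 9 * Num.sqrt (Num.sqrt eps) / (n * Num.sqrt n) in
    let B := [set v | kappa <= Num.min (lmu v) (lnu v)] in
    var_margB mu B (ffun_f mu nu B) <= C * d ^+ 2 * (n ^+ 3 + n / kappa).
Proof.
pose M : R := 2 * expR (5 * expR 2).
have M0 : 0 < M by rewrite mulr_gt0 ?expR_gt0.
exists (8 * M); split; first by rewrite mulr_gt0.
move=> V e lmu lnu eps esym eirr D3 eps0 eps1 mu0 nu0 Umu Unu n mu nu theta D_theta /=.
have n3 : 3 <= n by rewrite /n ler_nat (leq_trans D3) ?maxdeg_le_card.
have n1 : 1 <= n by lra.
have [kappa0 kappa1 thetaE] := kappa_theta_bounds eps0 eps1 n1.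
set d := dTV mu nu; set kappa := 10 ^- 9 * _ / _ in kappa0 kappa1 thetaE *.
have D_kappa : dpar lmu lnu * (10 * n) < kappa by rewrite -thetaE ltr_pM2r //; lra.
have D_d : dpar lmu lnu <= M * d := dpar_le_dTV esym eirr D3 (ltW Heta0) mu0 nu0 Umu Unu.
apply: le_trans (var_ffun_f_le _ mu0 nu0 kappa0 kappa1 _ D_kappa) _.
  by move=> v; rewrite inE.
rewrite -/n -/mu -/nu -/d.
have d0 : 0 <= d := dTV_ge0 mu nu.
have nk0 : 0 <= n / kappa by rewrite divr_ge0 ?ltW //; lra.
have := ler_wpM2r (mulr_ge0 d0 nk0) D_d.
have := mulr_ge0 (mulr_ge0 (ltW M0) (sqr_ge0 d)) nk0.
have := mulr_ge0 (mulr_ge0 (ltW M0) (sqr_ge0 d)) (exprn_ge0 3 (ltW (lt_le_trans ltr01 n1))).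
lra.
Qed.
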